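(* Let $(X,m)$ be an iterative midpoint set with associated infinitary operation $M$, let $I$ be a set, and let $s,t\in\mathcal{T}_I$ satisfy $\mathrm{w}(s)=\mathrm{w}(t)$. Then $\mathrm{val}(s,x)=\mathrm{val}(t,x)$ for all $x\colon I\to X$.
   Context: $(X,m)$ is a midpoint set ($m(x,x)=x$, $m(x,y)=m(y,x)$, $m(m(x,y),m(z,w))=m(m(x,z),m(y,w))$) that is iterative: for every set $Y$ and $h\colon Y\to X$, $t\colon Y\to Y$ there is a unique $u\colon Y\to X$ with $u(y)=m(h(y),u(t(y)))$; its associated $M\colon X^\omega\to X$ is the unique function with $M_l\,x_l=m(x_0,M_l\,x_{l+1})$. $\mathcal{T}_I$ is the smallest set with $I\subseteq\mathcal{T}_I$, containing the pair $(s,t)$ whenever $s,t\in\mathcal{T}_I$, and containing the sequence $(t_l)_l$ whenever each $t_l\in\mathcal{T}_I$ (well-founded trees with binary and $\omega$-branching nodes and $I$-labelled leaves). Interpretation: $\mathrm{val}(i,x)=x_i$, $\mathrm{val}((s,t),x)=m(\mathrm{val}(s,x),\mathrm{val}(t,x))$, $\mathrm{val}((t_l)_l,x)=M_l\,\mathrm{val}(t_l,x)$. Weight $\mathrm{w}(t)\colon I\to[0,1]$: $\mathrm{w}(i)(j)=\delta_{ij}$, $\mathrm{w}((s,t))(j)=\tfrac12\mathrm{w}(s)(j)+\tfrac12\mathrm{w}(t)(j)$, $\mathrm{w}((t_l)_l)(j)=\sum_{l\ge0}2^{-(l+1)}\mathrm{w}(t_l)(j)$. *)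

From Stdlib Require Import Reals ClassicalEpsilon.
From Coquelicot Require Import Coquelicot.
Set Implicit Arguments.
Open Scope R_scope.

Definition midpoint_set (X : Type) (m : X -> X -> X) : Prop :=
  (forall x, m x x = x) /\
  (forall x y, m x y = m y x) /\
  (forall x y z w, m (m x y) (m z w) = m (m x z) (m y w)).

Definition iterative (X : Type) (m : X -> X -> X) : Prop :=
  forall (Y : Type) (h : Y -> X) (t : Y -> Y),
    exists! u : Y -> X, forall y, u y = m (h y) (u (t y)).

Definition assoc_M_eq (X : Type) (m : X -> X -> X) (M : (nat -> X) -> X) : Prop :=
  forall x : nat -> X, M x = m (x 0%nat) (M (fun l => x (S l))).

Inductive tree (I : Type) : Type :=
| Leaf : I -> tree I
| Pair : tree I -> tree I -> tree I
| Omega : (nat -> tree I) -> tree I.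

Fixpoint val (X I : Type) (m : X -> X -> X) (M : (nat -> X) -> X)
  (t : tree I) (x : I -> X) : X :=
  match t with
  | Leaf i => x i
  | Pair s u => m (val m M s x) (val m M u x)
  | Omega f => M (fun l => val m M (f l) x)
  end.

Definition delta (I : Type) (i j : I) : R :=
  if excluded_middle_informative (i = j) then 1 else 0.

Fixpoint weight (I : Type) (t : tree I) (j : I) : R :=
  match t with
  | Leaf i => delta i j
  | Pair s u => / 2 * weight s j + / 2 * weight u j
  | Omega f => Series (fun l => (/ 2) ^ (S l) * weight (f l) j)
  end.

From Stdlib Require Import Reals List Permutation Lia Lra ClassicalEpsilon.
From Coquelicot Require Import Coquelicot.
Import ListNotations.

(* Pairs of trees of equal weight admit a common "head": unfold both trees to a common
   depth; for a well-founded tree the fraction of inner nodes in the frontier tends to 0,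
   and since leaf counts are bounded by the weight (a sub-probability) the leaves shared by
   the two frontiers fill at least half of the slots.  As [m] is commutative and medial, a
   balanced [m]-combination is invariant under permutation, so [val s = m h (val s')] and
   [val t = m h (val t')] with [h] built from the shared leaves and [s'], [t'] again of equal
   weight.  Hence [val s] and [val t], as functions of the pair, solve the same recursion
   and iterativity makes them equal. *)

Section FirstnSkipnApp.
Variable A : Type.

Lemma firstn_app_l n (l1 l2 : list A) :
  (n <= length l1)%nat -> firstn n (l1 ++ l2) = firstn n l1.
Proof. intros H. rewrite firstn_app, (proj2 (Nat.sub_0_le _ _) H). apply app_nil_r. Qed.

Lemma skipn_app_l n (l1 l2 : list A) :
  (n <= length l1)%nat -> skipn n (l1 ++ l2) = skipn n l1 ++ l2.
Proof. intros H. rewrite skipn_app, (proj2 (Nat.sub_0_le _ _) H). reflexivity. Qed.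

Lemma firstn_app_r n (l1 l2 : list A) :
  (length l1 <= n)%nat -> firstn n (l1 ++ l2) = l1 ++ firstn (n - length l1) l2.
Proof. intros H. rewrite firstn_app, firstn_all2 by exact H. reflexivity. Qed.

Lemma skipn_app_r n (l1 l2 : list A) :
  (length l1 <= n)%nat -> skipn n (l1 ++ l2) = skipn (n - length l1) l2.
Proof. intros H. rewrite skipn_app, skipn_all2 by exact H. reflexivity. Qed.

End FirstnSkipnApp.

Lemma pow2_ge1 (n : nat) : (1 <= 2 ^ n)%nat.
Proof. induction n; simpl; lia. Qed.

(* The default [d] is only read when [l] has fewer than [2 ^ n] entries. *)
Fixpoint balanced {Z : Type} (op : Z -> Z -> Z) (d : Z) (n : nat) (l : list Z) : Z :=
  match n with
  | O => hd d l
  | S n => op (balanced op d n (firstn (2 ^ n) l)) (balanced op d n (skipn (2 ^ n) l))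
  end.

Lemma balanced_app {Z : Type} (op : Z -> Z -> Z) d n (l1 l2 : list Z) :
  length l1 = (2 ^ n)%nat ->
  balanced op d (S n) (l1 ++ l2) = op (balanced op d n l1) (balanced op d n l2).
Proof.
  intros H. simpl. rewrite <- H, firstn_app, skipn_app, firstn_all, skipn_all, Nat.sub_diag.
  rewrite firstn_0, app_nil_r. reflexivity.
Qed.

Lemma balanced_map {Z W : Type} (op : Z -> Z -> Z) (op' : W -> W -> W) (E : Z -> W)
  (E_op : forall a b, E (op a b) = op' (E a) (E b)) d n :
  forall l, E (balanced op d n l) = balanced op' (E d) n (map E l).
Proof.
  induction n as [|n IH]; intros l; simpl.
  - destruct l; reflexivity.
  - rewrite E_op, !IH, firstn_map, skipn_map. reflexivity.
Qed.

Section BalancedPermutation.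
Variable Z : Type.
Variable op : Z -> Z -> Z.
Hypothesis opC : forall a b, op a b = op b a.
Hypothesis op_medial : forall a b c e, op (op a b) (op c e) = op (op a c) (op b e).
Variable d : Z.

Lemma op_medial_rot a b c e : op (op a b) (op c e) = op (op b c) (op a e).
Proof. rewrite (opC a b). apply op_medial. Qed.

Lemma balanced_swap_boundary n : forall l1 l2 x y,
  (length l1 + 1 = 2 ^ n)%nat -> (length l2 + 1 = 2 ^ n)%nat ->
  op (balanced op d n (l1 ++ [y])) (balanced op d n (x :: l2)) =
  op (balanced op d n (l1 ++ [x])) (balanced op d n (y :: l2)).
Proof.
  induction n as [|n IH]; intros l1 l2 x y H1 H2.
  - destruct l1, l2; simpl in *; try lia. apply opC.
  - pose proof (pow2_ge1 n). simpl in H1, H2. simpl balanced.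
    rewrite !firstn_app_l, !skipn_app_l by lia.
    destruct (2 ^ n)%nat as [|k]; [lia|].
    rewrite !firstn_cons, !skipn_cons, op_medial_rot,
      (op_medial_rot (balanced op d n (firstn (S k) l1))), IH;
      [reflexivity | rewrite length_skipn; lia | rewrite length_firstn; lia].
Qed.

Lemma balanced_swap n : forall l1 l2 x y,
  (length l1 + length l2 + 2 = 2 ^ n)%nat ->
  balanced op d n (l1 ++ y :: x :: l2) = balanced op d n (l1 ++ x :: y :: l2).
Proof.
  induction n as [|n IH]; intros l1 l2 x y H; [simpl in H; lia|].
  pose proof (pow2_ge1 n). simpl in H. simpl balanced.
  destruct (Nat.le_gt_cases (length l1 + 2) (2 ^ n)) as [Hle|Hgt].
  - rewrite !firstn_app_r, !skipn_app_r by lia.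
    destruct (2 ^ n - length l1)%nat as [|[|k]] eqn:Ek; try lia.
    simpl. f_equal. apply IH. rewrite length_firstn. lia.
  - destruct (Nat.le_gt_cases (2 ^ n) (length l1)) as [Hge|Hlt].
    + rewrite !firstn_app_l, !skipn_app_l by lia.
      f_equal. apply IH. rewrite length_skipn. lia.
    + rewrite !firstn_app_r, !skipn_app_r by lia.
      replace (2 ^ n - length l1)%nat with 1%nat by lia.
      apply balanced_swap_boundary; lia.
Qed.

Lemma balanced_Permutation n l l' : Permutation l l' ->
  length l = (2 ^ n)%nat -> balanced op d n l = balanced op d n l'.
Proof.
  intros HP. induction HP as [| x y l1 l2 | l l' l'' H1 IH1 H2 IH2]
    using Permutation_ind_transp; intros Hl.
  - reflexivity.
  - apply balanced_swap. rewrite length_app in Hl. simpl in Hl. lia.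
  - rewrite IH1 by exact Hl. apply IH2. rewrite <- (Permutation_length H1). exact Hl.
Qed.

End BalancedPermutation.
Arguments balanced_Permutation {Z op} opC op_medial d n {l l'}.

Section Frontier.
Variable I : Type.

(* A leaf is unfolded into two copies of itself: this is sound for [val] because [m] is
   idempotent, and for [weight] because the weight of a leaf is the average of two copies. *)
Definition children (t : tree I) : tree I * tree I :=
  match t with
  | Leaf a => (Leaf a, Leaf a)
  | Pair s u => (s, u)
  | Omega f => (f 0%nat, Omega (fun l => f (S l)))
  end.

Fixpoint frontier (N : nat) (t : tree I) : list (tree I) :=
  match N with
  | O => [t]
  | S N => frontier N (fst (children t)) ++ frontier N (snd (children t))
  end.

Lemma length_frontier N t : length (frontier N t) = (2 ^ N)%nat.
Proof.
  revert t; induction N as [|N IH]; intros t; simpl; [reflexivity|].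
  rewrite length_app, !IH. lia.
Qed.

Section Regroup.
Variables (Z : Type) (op : Z -> Z -> Z) (E : tree I -> Z).
Hypothesis E_children : forall t, E t = op (E (fst (children t))) (E (snd (children t))).

Lemma balanced_frontier d N t : balanced op d N (map E (frontier N t)) = E t.
Proof.
  revert t; induction N as [|N IH]; intros t; [reflexivity|].
  simpl frontier. rewrite map_app, balanced_app, !IH by (rewrite length_map; apply length_frontier).
  symmetry. apply E_children.
Qed.

Hypothesis E_Pair : forall a b, E (Pair a b) = op (E a) (E b).
Hypothesis opC : forall a b, op a b = op b a.
Hypothesis op_medial : forall a b c e, op (op a b) (op c e) = op (op a c) (op b e).

Lemma eval_regroup (d : tree I) n t (l r : list (tree I)) :
  Permutation (frontier (S n) t) (l ++ r) -> length l = (2 ^ n)%nat ->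
  E t = op (E (balanced (@Pair I) d n l)) (E (balanced (@Pair I) d n r)).
Proof.
  intros HP Hl.
  rewrite <- (balanced_frontier (E d) (S n) t),
    (balanced_Permutation opC op_medial (E d) (S n) (Permutation_map E HP))
    by (rewrite length_map; apply length_frontier).
  rewrite map_app, balanced_app by (rewrite length_map; exact Hl).
  rewrite !(balanced_map (@Pair I) op E E_Pair). reflexivity.
Qed.

End Regroup.
End Frontier.
Arguments children {I}. Arguments frontier {I}.

Definition rsum {A : Type} (f : A -> R) (D : list A) : R :=
  fold_right (fun a r => f a + r) 0 D.

Section FiniteSums.
Context {A : Type}.
Implicit Types (f g : A -> R) (D : list A).

Lemma rsum_ext f g D : (forall a, f a = g a) -> rsum f D = rsum g D.
Proof. intros H. induction D as [|a D IH]; simpl; [reflexivity|]. rewrite H, IH. reflexivity. Qed.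

Lemma rsum_plus f g D : rsum (fun a => f a + g a) D = rsum f D + rsum g D.
Proof. induction D as [|a D IH]; simpl; [ring|]. rewrite IH. ring. Qed.

Lemma rsum_scal c f D : rsum (fun a => c * f a) D = c * rsum f D.
Proof. induction D as [|a D IH]; simpl; [ring|]. rewrite IH. ring. Qed.

Lemma rsum_le f g D : (forall a, f a <= g a) -> rsum f D <= rsum g D.
Proof. intros H. induction D as [|a D IH]; simpl; [lra|]. specialize (H a). lra. Qed.

Lemma rsum_bounds f D : (forall a, 0 <= f a <= 1) -> 0 <= rsum f D <= INR (length D).
Proof.
  intros H. induction D as [|a D IH]; simpl length; [simpl; lra|].
  rewrite S_INR. simpl. specialize (H a). lra.
Qed.

End FiniteSums.

Lemma Series_nonneg (a : nat -> R) : (forall n, 0 <= a n) -> ex_series a -> 0 <= Series a.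
Proof.
  intros Ha Hex. replace 0 with (Series (fun n => 0 * a n)) by (rewrite Series_scal_l; ring).
  apply Series_le; [intros n; specialize (Ha n); lra | exact Hex].
Qed.

Lemma is_series_half_pow : is_series (fun l => (/ 2) ^ S l) 1.
Proof.
  assert (Hgeom : Rabs (/ 2) < 1) by (rewrite Rabs_pos_eq; lra).
  apply is_series_geom, (is_series_scal_l (/ 2)) in Hgeom.
  replace 1 with (scal (/ 2) (/ (1 - / 2))) by (unfold scal; simpl; unfold mult; simpl; field).
  exact Hgeom.
Qed.

Lemma Series_half_pow : Series (fun l => (/ 2) ^ S l) = 1.
Proof. apply is_series_unique, is_series_half_pow. Qed.

Lemma ex_series_half_pow_mult (c : nat -> R) (K : R) :
  (forall l, 0 <= c l <= K) -> ex_series (fun l => (/ 2) ^ S l * c l).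
Proof.
  intros Hc.
  apply (@ex_series_le R_AbsRing R_CompleteNormedModule _ (fun l => K * (/ 2) ^ S l)).
  - intros l. change (norm ((/ 2) ^ S l * c l)) with (Rabs ((/ 2) ^ S l * c l)).
    assert (0 < (/ 2) ^ S l) by (apply pow_lt; lra).
    specialize (Hc l). rewrite Rabs_pos_eq by nra. nra.
  - exact (ex_series_scal_l K _ (ex_intro _ 1 is_series_half_pow)).
Qed.

Lemma rsum_Series {A : Type} (c : nat -> A -> R) (D : list A) :
  (forall l a, 0 <= c l a <= 1) ->
  rsum (fun a => Series (fun l => (/ 2) ^ S l * c l a)) D =
  Series (fun l => (/ 2) ^ S l * rsum (c l) D).
Proof.
  intros Hc. induction D as [|a D IH]; unfold rsum in *; cbn [fold_right].
  - replace 0 with (Series (fun l => 0 * (/ 2) ^ S l)) at 1 by (rewrite Series_scal_l; ring).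
    apply Series_ext. intros l. ring.
  - rewrite IH, <- Series_plus.
    + apply Series_ext. intros l. ring.
    + apply (ex_series_half_pow_mult _ 1). intros l. apply Hc.
    + apply (ex_series_half_pow_mult _ (INR (length D))). intros l. apply rsum_bounds, Hc.
Qed.

Section Weight.
Context {I : Type}.

Lemma rsum_delta_notin (i : I) D : ~ In i D -> rsum (delta i) D = 0.
Proof.
  induction D as [|b D IH]; intros Hi; simpl; [reflexivity|].
  unfold delta at 1. destruct excluded_middle_informative as [->|_].
  - exfalso. apply Hi. left. reflexivity.
  - rewrite IH; [ring|]. intros H. apply Hi. right. exact H.
Qed.

Lemma rsum_delta_in (i : I) D : NoDup D -> In i D -> rsum (delta i) D = 1.
Proof.
  induction 1 as [|b D Hb HD IH]; intros Hi; [destruct Hi|]. simpl.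
  unfold delta at 1. destruct excluded_middle_informative as [->|Hne].
  - rewrite rsum_delta_notin by exact Hb. ring.
  - destruct Hi as [->|Hi]; [contradiction|]. rewrite IH by exact Hi. ring.
Qed.

Lemma weight_bounds (t : tree I) a : 0 <= weight t a <= 1.
Proof.
  induction t as [i|s IHs u IHu|f IH]; simpl.
  - unfold delta. destruct excluded_middle_informative; lra.
  - lra.
  - assert (Hex : ex_series (fun l => (/ 2) ^ S l * weight (f l) a))
      by (apply (ex_series_half_pow_mult _ 1); intros l; apply IH).
    assert (Hpos : forall l, 0 <= (/ 2) ^ S l * weight (f l) a)
      by (intros l; apply Rmult_le_pos; [apply pow_le; lra | apply IH]).
    split; [apply Series_nonneg; assumption|].
    rewrite <- Series_half_pow. apply Series_le; [|exists 1; apply is_series_half_pow].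
    intros l. split; [apply Hpos|].
    assert (0 < (/ 2) ^ S l) by (apply pow_lt; lra).
    specialize (IH l). change ((/ 2) ^ S l * weight (f l) a <= (/ 2) ^ S l). nra.
Qed.

Lemma weight_rsum_le_1 (t : tree I) D : NoDup D -> rsum (weight t) D <= 1.
Proof.
  intros HD. induction t as [i|s IHs u IHu|f IH]; simpl.
  - destruct (classic (In i D)).
    + rewrite rsum_delta_in by assumption. lra.
    + rewrite rsum_delta_notin by assumption. lra.
  - rewrite rsum_plus, !rsum_scal. lra.
  - rewrite (rsum_Series (fun l a => weight (f l) a)) by (intros; apply weight_bounds).
    rewrite <- Series_half_pow. apply Series_le; [|exists 1; apply is_series_half_pow].
    intros l. assert (0 < (/ 2) ^ S l) by (apply pow_lt; lra).
    pose proof (rsum_bounds (weight (f l)) D (weight_bounds (f l))).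
    specialize (IH l).
    change (0 <= (/ 2) ^ S l * rsum (weight (f l)) D <= (/ 2) ^ S l). split; nra.
Qed.

Lemma weight_children (t : tree I) a :
  weight t a = / 2 * weight (fst (children t)) a + / 2 * weight (snd (children t)) a.
Proof.
  destruct t as [i|s u|f]; simpl; [lra|lra|].
  rewrite Series_incr_1
    by (apply (ex_series_half_pow_mult _ 1); intros l; apply weight_bounds).
  rewrite <- Series_scal_l. simpl. f_equal; [ring|]. apply Series_ext. intros l. simpl. ring.
Qed.

End Weight.

Section Leaves.
Variable I : Type.

Definition label_eq_dec (a b : I) : {a = b} + {a <> b} := excluded_middle_informative (a = b).

Lemma INR_count_occ_cons (b : I) U a :
  INR (count_occ label_eq_dec (b :: U) a) = delta b a + INR (count_occ label_eq_dec U a).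
Proof.
  simpl. unfold delta, label_eq_dec.
  destruct excluded_middle_informative; [rewrite S_INR|]; ring.
Qed.

Lemma length_rsum_count (U D : list I) : NoDup D -> incl U D ->
  INR (length U) = rsum (fun a => INR (count_occ label_eq_dec U a)) D.
Proof.
  intros HD. induction U as [|b U IH]; intros HU.
  - clear. induction D as [|a D IHD]; [reflexivity|]. simpl in *. rewrite <- IHD. ring.
  - rewrite (rsum_ext _ _ D (INR_count_occ_cons b U)), rsum_plus.
    rewrite rsum_delta_in by (auto using incl_cons_inv; now apply HU; left).
    rewrite <- IH by (intros a Ha; apply HU; now right).
    simpl length. rewrite S_INR. ring.
Qed.

Lemma length_le_of_count_le (p : I -> R) (K : R) (U : list I) : 0 <= K ->
  (forall D, NoDup D -> rsum p D <= 1) ->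
  (forall a, INR (count_occ label_eq_dec U a) <= K * p a) -> INR (length U) <= K.
Proof.
  intros HK Hp HU.
  rewrite (length_rsum_count U (nodup label_eq_dec U))
    by (apply NoDup_nodup || (intros a; apply nodup_In)).
  eapply Rle_trans; [apply rsum_le, HU|].
  rewrite rsum_scal. pose proof (Hp _ (NoDup_nodup label_eq_dec U)). nra.
Qed.

Lemma Permutation_common_part (L1 L2 : list I) : exists c r1 r2,
  Permutation L1 (c ++ r1) /\ Permutation L2 (c ++ r2) /\
  (forall a, In a r1 -> In a r2 -> False).
Proof.
  revert L2. induction L1 as [|a L1 IH]; intros L2.
  - exists [], [], L2. split; [constructor|]. split; [apply Permutation_refl | intros ? []].
  - destruct (classic (In a L2)) as [Hin|Hnin].
    + destruct (in_split a L2 Hin) as [l1 [l2 ->]].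
      destruct (IH (l1 ++ l2)) as [c [r1 [r2 [H1 [H2 H3]]]]].
      exists (a :: c), r1, r2. repeat split; auto.
      * simpl. constructor. exact H1.
      * rewrite <- Permutation_middle. simpl. constructor. exact H2.
    + destruct (IH L2) as [c [r1 [r2 [H1 [H2 H3]]]]].
      exists c, (a :: r1), r2. repeat split; auto.
      * rewrite <- Permutation_middle. constructor. exact H1.
      * intros b [<-|Hb] Hb2; [|exact (H3 b Hb Hb2)].
        apply Hnin, (Permutation_in _ (Permutation_sym H2)), in_or_app. right. exact Hb2.
Qed.

Fixpoint leaf_labels (L : list (tree I)) : list I :=
  match L with
  | [] => []
  | Leaf a :: L' => a :: leaf_labels L'
  | _ :: L' => leaf_labels L'
  end.

Fixpoint inner_nodes (L : list (tree I)) : list (tree I) :=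
  match L with
  | [] => []
  | Leaf _ :: L' => inner_nodes L'
  | t :: L' => t :: inner_nodes L'
  end.

Lemma leaf_labels_app L1 L2 : leaf_labels (L1 ++ L2) = leaf_labels L1 ++ leaf_labels L2.
Proof. induction L1 as [|[] L1 IH]; simpl; rewrite ?IH; reflexivity. Qed.

Lemma inner_nodes_app L1 L2 : inner_nodes (L1 ++ L2) = inner_nodes L1 ++ inner_nodes L2.
Proof. induction L1 as [|[] L1 IH]; simpl; rewrite ?IH; reflexivity. Qed.

Lemma Permutation_leaves_inner L :
  Permutation L (map (@Leaf I) (leaf_labels L) ++ inner_nodes L).
Proof.
  induction L as [|[] L IH]; simpl; [constructor | constructor; exact IH | |];
    rewrite <- Permutation_middle; constructor; exact IH.
Qed.

Lemma count_leaf_labels_frontier N (t : tree I) a :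
  INR (count_occ label_eq_dec (leaf_labels (frontier N t)) a) <= 2 ^ N * weight t a.
Proof.
  revert t. induction N as [|N IH]; intros t.
  - pose proof (weight_bounds t a).
    destruct t as [i| |]; simpl leaf_labels; [rewrite INR_count_occ_cons| |]; simpl in *; lra.
  - simpl frontier. rewrite leaf_labels_app, count_occ_app, plus_INR, (weight_children t a).
    pose proof (IH (fst (children t))). pose proof (IH (snd (children t))).
    simpl pow. lra.
Qed.

End Leaves.
Arguments leaf_labels {I}. Arguments inner_nodes {I}. Arguments label_eq_dec {I}.

Section InnerCount.
Variable I : Type.

Definition inner_count (N : nat) (t : tree I) : nat := length (inner_nodes (frontier N t)).

Lemma inner_count_S N t :
  inner_count (S N) t = (inner_count N (fst (children t)) + inner_count N (snd (children t)))%nat.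
Proof. unfold inner_count. simpl. rewrite inner_nodes_app, length_app. reflexivity. Qed.

Lemma inner_count_le N t : (inner_count N t <= 2 ^ N)%nat.
Proof.
  unfold inner_count. rewrite <- (length_frontier I N t).
  induction (frontier N t) as [|[] L IH]; simpl; lia.
Qed.

Lemma inner_count_S_le N t : (inner_count (S N) t <= 2 * inner_count N t)%nat.
Proof.
  revert t. induction N as [|N IH]; intros t; rewrite inner_count_S.
  - pose proof (inner_count_le 0 (fst (children t))).
    pose proof (inner_count_le 0 (snd (children t))).
    destruct t; unfold inner_count in *; simpl in *; lia.
  - rewrite (inner_count_S N t).
    pose proof (IH (fst (children t))). pose proof (IH (snd (children t))). lia.
Qed.

Lemma inner_count_small_mono N N' t k :
  (inner_count N t * 2 ^ k <= 2 ^ N)%nat -> (N <= N')%nat ->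
  (inner_count N' t * 2 ^ k <= 2 ^ N')%nat.
Proof.
  intros H HN. induction HN as [|N' HN IH]; [exact H|].
  pose proof (inner_count_S_le N' t). rewrite Nat.pow_succ_r'. nia.
Qed.

(* The depth-[N + j] frontier of [Omega f] is made of frontiers of [f 0], ..., [f (j - 1)],
   each with a fraction at most [2 ^ - S k] of inner nodes, and of a depth-[N] frontier of
   the remaining tail, which has at most [2 ^ N] slots. *)
Lemma inner_count_Omega_le k N j : forall f : nat -> tree I,
  (forall l, (l < j)%nat -> forall N', (N <= N')%nat ->
     (inner_count N' (f l) * 2 ^ S k <= 2 ^ N')%nat) ->
  (inner_count (N + j) (Omega f) * 2 ^ S k <= 2 ^ (N + j) + 2 ^ (N + S k))%nat.
Proof.
  induction j as [|j IH]; intros f Hf.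
  - rewrite Nat.add_0_r, Nat.pow_add_r. pose proof (inner_count_le N (Omega f)). nia.
  - rewrite Nat.add_succ_r, inner_count_S. simpl fst; simpl snd.
    pose proof (Hf 0%nat ltac:(lia) (N + j)%nat ltac:(lia)).
    pose proof (IH (fun l => f (S l)) ltac:(intros l Hl N' HN'; apply Hf; lia)).
    rewrite (Nat.pow_succ_r' 2 (N + j)). lia.
Qed.

Lemma inner_count_eventually_small (t : tree I) :
  forall k, exists N, (inner_count N t * 2 ^ k <= 2 ^ N)%nat.
Proof.
  induction t as [i|s IHs u IHu|f IH]; intros k.
  - exists 0%nat. unfold inner_count. simpl. lia.
  - destruct (IHs k) as [Ns Hs], (IHu k) as [Nu Hu].
    exists (S (Nat.max Ns Nu)). rewrite inner_count_S. simpl fst; simpl snd.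
    pose proof (inner_count_small_mono Ns (Nat.max Ns Nu) s k Hs ltac:(lia)).
    pose proof (inner_count_small_mono Nu (Nat.max Ns Nu) u k Hu ltac:(lia)).
    rewrite Nat.pow_succ_r'. nia.
  - assert (Hhead : forall j, exists N0, forall l, (l < j)%nat -> forall N', (N0 <= N')%nat ->
              (inner_count N' (f l) * 2 ^ S k <= 2 ^ N')%nat).
    { induction j as [|j [N1 H1]]; [exists 0%nat; intros l Hl; lia|].
      destruct (IH j (S k)) as [N2 H2].
      exists (Nat.max N1 N2). intros l Hl N' HN'.
      destruct (Nat.eq_dec l j) as [->|Hne].
      + apply (inner_count_small_mono N2); [exact H2|lia].
      + apply H1; lia. }
    destruct (Hhead (S k)) as [N0 H0].
    exists (N0 + S k)%nat.
    pose proof (inner_count_Omega_le k N0 (S k) f H0) as Hb.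
    rewrite Nat.pow_succ_r' in Hb. nia.
Qed.

End InnerCount.
Arguments inner_count {I}.

Section CommonLeaves.
Context {I : Type}.

Lemma length_leaves_inner (L : list (tree I)) :
  (length (leaf_labels L) + length (inner_nodes L))%nat = length L.
Proof.
  rewrite (Permutation_length (Permutation_leaves_inner I L)), length_app, length_map.
  reflexivity.
Qed.

(* A label can only be left over on one side, so its count in [c ++ r1 ++ r2] is its count
   in one of the two frontiers, hence at most [2 ^ N] times its weight. *)
Lemma common_leaves_length_le N (s t : tree I) c r1 r2 :
  (forall a, weight s a = weight t a) ->
  Permutation (leaf_labels (frontier N s)) (c ++ r1) ->
  Permutation (leaf_labels (frontier N t)) (c ++ r2) ->
  (forall a, In a r1 -> In a r2 -> False) ->
  (length (c ++ r1 ++ r2) <= 2 ^ N)%nat.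
Proof.
  intros Hw H1 H2 Hdisj. apply INR_le.
  rewrite pow_INR. replace (INR 2) with 2 by (simpl; ring).
  apply (length_le_of_count_le I (weight s)); [apply pow_le; lra | apply weight_rsum_le_1 |].
  intros a. pose proof (count_leaf_labels_frontier I N s a) as Bs.
  pose proof (count_leaf_labels_frontier I N t a) as Bt. rewrite <- Hw in Bt.
  rewrite (proj1 (Permutation_count_occ _ _ _) H1 a), count_occ_app in Bs.
  rewrite (proj1 (Permutation_count_occ _ _ _) H2 a), count_occ_app in Bt.
  rewrite !count_occ_app.
  destruct (classic (In a r1)) as [Hin|Hnin].
  - rewrite (proj1 (count_occ_not_In _ r2 a)) by exact (Hdisj a Hin).
    rewrite Nat.add_0_r. exact Bs.
  - rewrite (proj1 (count_occ_not_In _ r1 a)) by exact Hnin. exact Bt.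
Qed.

(* Once inner nodes fill at most a quarter of the frontiers, the common leaves fill half. *)
Lemma frontier_common_leaves (s t : tree I) :
  (forall a, weight s a = weight t a) ->
  exists n c rs rt, length c = (2 ^ n)%nat /\
    Permutation (frontier (S n) s) (map (@Leaf I) c ++ rs) /\
    Permutation (frontier (S n) t) (map (@Leaf I) c ++ rt).
Proof.
  intros Hw.
  destruct (inner_count_eventually_small I s 2) as [Ns Hs].
  destruct (inner_count_eventually_small I t 2) as [Nt Ht].
  set (n := Nat.max Ns Nt).
  apply (inner_count_small_mono I Ns (S n)) in Hs; [|lia].
  apply (inner_count_small_mono I Nt (S n)) in Ht; [|lia].
  set (Fs := frontier (S n) s) in *. set (Ft := frontier (S n) t) in *.
  destruct (Permutation_common_part I (leaf_labels Fs) (leaf_labels Ft))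
    as (c & r1 & r2 & H1 & H2 & Hdisj).
  pose proof (common_leaves_length_le (S n) s t c r1 r2 Hw H1 H2 Hdisj) as Hlen.
  pose proof (length_leaves_inner Fs) as Ls. pose proof (length_leaves_inner Ft) as Lt.
  unfold Fs, Ft in Ls, Lt. rewrite length_frontier in Ls, Lt. fold Fs Ft in Ls, Lt.
  rewrite (Permutation_length H1) in Ls. rewrite (Permutation_length H2) in Lt.
  unfold inner_count in Hs, Ht. fold Fs in Hs. fold Ft in Ht.
  change (2 ^ 2)%nat with 4%nat in Hs, Ht. rewrite !length_app in *.
  assert (Hc : (2 ^ n <= length c)%nat) by (pose proof (Nat.pow_succ_r' 2 n); lia).
  exists n, (firstn (2 ^ n) c),
    (map (@Leaf I) (skipn (2 ^ n) c) ++ map (@Leaf I) r1 ++ inner_nodes Fs),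
    (map (@Leaf I) (skipn (2 ^ n) c) ++ map (@Leaf I) r2 ++ inner_nodes Ft).
  split; [rewrite length_firstn; lia|]. fold Fs Ft.
  split; (etransitivity; [apply Permutation_leaves_inner|]);
    [rewrite H1 | rewrite H2]; rewrite !app_assoc, <- !map_app, firstn_skipn; reflexivity.
Qed.

End CommonLeaves.

Lemma val_children {X : Type} {m : X -> X -> X} (Hmid : midpoint_set m)
  {M : (nat -> X) -> X} (HM : assoc_M_eq m M) {I : Type} (x : I -> X) (t : tree I) :
  val m M t x = m (val m M (fst (children t)) x) (val m M (snd (children t)) x).
Proof.
  destruct Hmid as (Hidem & _ & _).
  destruct t as [i|s u|f]; simpl; [symmetry; apply Hidem | reflexivity | apply HM].
Qed.

Lemma val_weight_common_step {X : Type} {m : X -> X -> X} (Hmid : midpoint_set m)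
  {M : (nat -> X) -> X} (HM : assoc_M_eq m M) {I : Type} (x : I -> X) (s t : tree I) :
  (forall a, weight s a = weight t a) ->
  exists h s' t', (forall a, weight s' a = weight t' a) /\
    val m M s x = m h (val m M s' x) /\ val m M t x = m h (val m M t' x).
Proof.
  intros Hw. pose proof Hmid as (_ & Hcomm & Hmedial).
  destruct (frontier_common_leaves s t Hw) as (n & c & rs & rt & Hc & Hs & Ht).
  assert (Hlc : length (map (@Leaf I) c) = (2 ^ n)%nat) by (rewrite length_map; exact Hc).
  exists (val m M (balanced (@Pair I) s n (map (@Leaf I) c)) x),
    (balanced (@Pair I) s n rs), (balanced (@Pair I) s n rt).
  split; [|split]; [intros a | ..].
  - assert (Hregroup : forall u r, Permutation (frontier (S n) u) (map (@Leaf I) c ++ r) ->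
      weight u a = / 2 * weight (balanced (@Pair I) s n (map (@Leaf I) c)) a
                   + / 2 * weight (balanced (@Pair I) s n r) a).
    { intros u r Hu.
      apply (eval_regroup I _ (fun p q => / 2 * p + / 2 * q) (fun v => weight v a));
        [intros; apply weight_children | reflexivity | intros; lra | intros; lra | exact Hu | exact Hlc]. }
    pose proof (Hregroup s rs Hs). pose proof (Hregroup t rt Ht). specialize (Hw a). lra.
  - exact (eval_regroup I _ m (fun v => val m M v x) (val_children Hmid HM x)
      (fun _ _ => eq_refl) Hcomm Hmedial s n s _ _ Hs Hlc).
  - exact (eval_regroup I _ m (fun v => val m M v x) (val_children Hmid HM x)
      (fun _ _ => eq_refl) Hcomm Hmedial s n t _ _ Ht Hlc).
Qed.

(* Two maps that keep emitting the same head [h] both solve one recursion [u y = m (h y) (u (t y))]. *)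
Lemma iterative_eq_of_common_step {X : Type} {m : X -> X -> X} (Hit : iterative m)
  {Y : Type} (f g : Y -> X) :
  (forall y, exists h y', f y = m h (f y') /\ g y = m h (g y')) -> forall y, f y = g y.
Proof.
  intros Hstep.
  assert (Hnext : forall y, exists p : X * Y,
      f y = m (fst p) (f (snd p)) /\ g y = m (fst p) (g (snd p))).
  { intros y. destruct (Hstep y) as (h & y' & H). exists (h, y'). exact H. }
  set (next := fun y => proj1_sig (constructive_indefinite_description _ (Hnext y))).
  destruct (Hit Y (fun y => fst (next y)) (fun y => snd (next y))) as [u [_ Huniq]].
  assert (Hf : u = f)
    by (apply Huniq; intros y; exact (proj1 (proj2_sig (constructive_indefinite_description _ (Hnext y))))).
  assert (Hg : u = g)
    by (apply Huniq; intros y; exact (proj2 (proj2_sig (constructive_indefinite_description _ (Hnext y))))).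
  intros y. rewrite <- Hf, <- Hg. reflexivity.
Qed.

Theorem mainTheorem11 (X : Type) (m : X -> X -> X)
  (Hmid : midpoint_set m) (Hit : iterative m)
  (M : (nat -> X) -> X) (HM : assoc_M_eq m M)
  (I : Type) (s t : tree I) :
  weight s = weight t ->
  forall x : I -> X, val m M s x = val m M t x.
Proof.
  intros Hw x.
  pose (same_weight := fun p : tree I * tree I => forall a, weight (fst p) a = weight (snd p) a).
  refine (iterative_eq_of_common_step Hit
    (fun y : sig same_weight => val m M (fst (proj1_sig y)) x)
    (fun y : sig same_weight => val m M (snd (proj1_sig y)) x) _
    (exist same_weight (s, t) (fun a => f_equal (fun w => w a) Hw))).
  intros [[s0 t0] Hw0].
  destruct (val_weight_common_step Hmid HM x s0 t0 Hw0) as (h & s' & t' & Hw' & Hs & Ht).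
  exists h, (exist same_weight (s', t') Hw'). split; assumption.
Qed.
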